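(* Let $S$ be an anti-rectangular AG-groupoid. The following are equivalent: (i) $S$ is fully idempotent, i.e. $I^{2}=I$ for every ideal $I$ of $S$; (ii) $A\cap B=AB$ for all ideals $A,B$ of $S$; (iii) the set $L_S$ of ideals of $S$, with the operation $A\wedge B=AB$, is a semilattice (i.e. $\wedge$ is a well-defined operation on $L_S$ which is commutative, associative and idempotent).
   Context: An AG-groupoid is a set $S$ with a binary operation satisfying $(ab)c=(cb)a$ for all $a,b,c\in S$. It is anti-rectangular if $a=(ba)b$ for all $a,b\in S$. For nonempty subsets, $AB=\{ab:a\in A,b\in B\}$, $I^{2}=II$. An ideal of $S$ is a nonempty subset $I$ with $SI\subseteq I$ and $IS\subseteq I$. *)

Set Implicit Arguments.

Section AG.
Variable S : Type.
Variable op : S -> S -> S.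

Definition AG_groupoid : Prop := forall a b c, op (op a b) c = op (op c b) a.
Definition anti_rectangular : Prop := forall a b, a = op (op b a) b.

Definition subset (A B : S -> Prop) : Prop := forall x, A x -> B x.
Definition seteq (A B : S -> Prop) : Prop := forall x, A x <-> B x.
Definition inter (A B : S -> Prop) : S -> Prop := fun x => A x /\ B x.
Definition setT : S -> Prop := fun _ => True.
Definition setmul (A B : S -> Prop) : S -> Prop :=
  fun x => exists a b, A a /\ B b /\ x = op a b.

Definition is_ideal (I : S -> Prop) : Prop :=
  (exists x, I x) /\ subset (setmul setT I) I /\ subset (setmul I setT) I.

Definition fully_idempotent : Prop :=
  forall I, is_ideal I -> seteq (setmul I I) I.

Definition inter_eq_prod : Prop :=
  forall A B, is_ideal A -> is_ideal B -> seteq (inter A B) (setmul A B).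

Definition ideals_semilattice : Prop :=
  (forall A B, is_ideal A -> is_ideal B -> is_ideal (setmul A B)) /\
  (forall A B, is_ideal A -> is_ideal B -> seteq (setmul A B) (setmul B A)) /\
  (forall A B C, is_ideal A -> is_ideal B -> is_ideal C ->
     seteq (setmul (setmul A B) C) (setmul A (setmul B C))) /\
  (forall A, is_ideal A -> seteq (setmul A A) A).
End AG.


(* In an anti-rectangular groupoid every element is a product:
   taking a = b = x in  a = (b a) b  gives  x = (x x) x.
   So for ideals A, B and x in A ∩ B we get x ∈ AB, since x x ∈ A (A is a
   right ideal) and x ∈ B.  Conversely AB ⊆ A ∩ B holds in any groupoid, so
   A ∩ B = AB for all ideals A, B: condition (ii) holds outright.  Taking
   A = B gives (i).  For (iii), AB = A ∩ B is again an ideal (intersections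
   of ideals are ideals), and commutativity, associativity and idempotence of
   the product on ideals reduce to the same laws for intersection.  Hence all
   three conditions are true, and in particular equivalent. *)

Section Ideals.
Variables (S : Type) (op : S -> S -> S).

Lemma ideal_mul_left {I : S -> Prop} (s x : S) :
  is_ideal op I -> I x -> I (op s x).
Proof.
  intros [_ [HL _]] Hx. apply HL. exists s, x. repeat split. exact Hx.
Qed.

Lemma ideal_mul_right {I : S -> Prop} (x s : S) :
  is_ideal op I -> I x -> I (op x s).
Proof.
  intros [_ [_ HR]] Hx. apply HR. exists x, s. repeat split. exact Hx.
Qed.

Lemma prod_sub_inter {A B : S -> Prop} :
  is_ideal op A -> is_ideal op B -> subset (setmul op A B) (inter A B).
Proof.
  intros HA HB x [a [b [Ha [Hb ->]]]]. split.
  - exact (ideal_mul_right a b HA Ha).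
  - exact (ideal_mul_left a b HB Hb).
Qed.

(* The intersection of two ideals is an ideal; it is nonempty because it
   contains the product of an element of A with an element of B. *)
Lemma inter_ideal {A B : S -> Prop} :
  is_ideal op A -> is_ideal op B -> is_ideal op (inter A B).
Proof.
  intros HA HB. split; [|split].
  - destruct (proj1 HA) as [a Ha], (proj1 HB) as [b Hb].
    exists (op a b). apply (prod_sub_inter HA HB). exists a, b. auto.
  - intros x [s [y [_ [[HyA HyB] ->]]]].
    split; apply ideal_mul_left; assumption.
  - intros x [y [s [[HyA HyB] [_ ->]]]].
    split; apply ideal_mul_right; assumption.
Qed.

Lemma ideal_seteq {I J : S -> Prop} :
  seteq I J -> is_ideal op I -> is_ideal op J.
Proof.
  intros E [[x Hx] [HL HR]]. split; [|split].
  - exists x. apply E. exact Hx.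
  - intros y [s [z [_ [Hz ->]]]]. apply E, HL. exists s, z.
    repeat split. apply E. exact Hz.
  - intros y [z [s [Hz [_ ->]]]]. apply E, HR. exists z, s.
    repeat split. apply E. exact Hz.
Qed.

Hypothesis hAR : anti_rectangular op.

Lemma self_factor (x : S) : x = op (op x x) x.
Proof. apply hAR. Qed.

Lemma inter_sub_prod {A B : S -> Prop} :
  is_ideal op A -> subset (inter A B) (setmul op A B).
Proof.
  intros HA x [HxA HxB]. exists (op x x), x. repeat split.
  - exact (ideal_mul_right x x HA HxA).
  - exact HxB.
  - apply self_factor.
Qed.

Lemma inter_eq_prod_holds : inter_eq_prod op.
Proof.
  intros A B HA HB x. split.
  - apply inter_sub_prod. exact HA.
  - apply prod_sub_inter; assumption.
Qed.

(* Condition (i): the case A = B of (ii). *)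
Lemma fully_idempotent_holds : fully_idempotent op.
Proof.
  intros I HI x. destruct (inter_eq_prod_holds _ _ HI HI x) as [H1 H2]. split.
  - intro Hx. apply H2. exact Hx.
  - intro Hx. apply H1. split; exact Hx.
Qed.

(* The product of two ideals is an ideal, being equal to their intersection. *)
Lemma prod_ideal {A B : S -> Prop} :
  is_ideal op A -> is_ideal op B -> is_ideal op (setmul op A B).
Proof.
  intros HA HB. apply (ideal_seteq (inter_eq_prod_holds _ _ HA HB)).
  apply inter_ideal; assumption.
Qed.

(* Condition (iii): the laws of ∧ on ideals are those of intersection. *)
Lemma ideals_semilattice_holds : ideals_semilattice op.
Proof.
  split; [exact (@prod_ideal) | split; [|split]].
  - intros A B HA HB x.
    pose proof (inter_eq_prod_holds _ _ HA HB x).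
    pose proof (inter_eq_prod_holds _ _ HB HA x).
    unfold inter in *; tauto.
  - intros A B C HA HB HC x.
    pose proof (inter_eq_prod_holds _ _ (prod_ideal HA HB) HC x).
    pose proof (inter_eq_prod_holds _ _ HA (prod_ideal HB HC) x).
    pose proof (inter_eq_prod_holds _ _ HA HB x).
    pose proof (inter_eq_prod_holds _ _ HB HC x).
    unfold inter in *; tauto.
  - exact fully_idempotent_holds.
Qed.

End Ideals.

Theorem proposition5 (S : Type) (op : S -> S -> S)
  (hAG : AG_groupoid op) (hAR : anti_rectangular op) :
  (fully_idempotent op <-> inter_eq_prod op) /\
  (inter_eq_prod op <-> ideals_semilattice op).
Proof.
  pose proof (@fully_idempotent_holds S op hAR) as Hi.
  pose proof (@inter_eq_prod_holds S op hAR) as Hii.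
  pose proof (@ideals_semilattice_holds S op hAR) as Hiii.
  tauto.
Qed.
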